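(* Let $(\eta,\theta)\in\mathcal{R}$, let $P(u_m,v_m)$ and $Q(u_M,v_M)$ be the two fold points of the critical manifold $M_{20}$, and suppose the interior equilibrium $E_*=(u_*,v_* )$ exists and satisfies $u_*>u_M$. Then for every sufficiently small $\epsilon>0$, $E_*$ is globally stable for the system $$\frac{du}{dt}=u(1-u)(u+\theta)(u^2+\eta)-u^2v,\qquad \frac{dv}{dt}=\epsilon\big(u^2v-\delta v(u^2+\eta)\big),$$ i.e., it is locally stable and every trajectory starting in the open first quadrant converges to $E_*$ as $t\to\infty$.
   Context: Parameters are $\delta,\theta,\eta>0$. Let $\phi(u)=\frac1u(1-u)(u+\theta)(u^2+\eta)$ and the critical manifold $M_{20}=\{(u,v):u>0,\ v=\phi(u)\}$. Let $\Gamma=9\theta^2+6\theta+9-24\eta$, $\Lambda_1=\frac{\eta}{8}(\theta^2+\frac{22}{3}\theta+1)-\frac{1}{96}(3(1+\theta^4)+2(\theta^2+4\eta^2))$ and $\Lambda_2=\frac{1-\theta}{288}(3\theta^2+2\theta+3-8\eta)$. Define - $\mathcal{R}_1=\{0<\eta<\theta\le1,\ \frac{\sqrt\Gamma}{3}-3<\theta<1+\frac{\sqrt\Gamma}{3},\ \Gamma>(\Lambda_1/\Lambda_2)^2\}$, - $\mathcal{R}_2=\{0<\eta<1<\theta,\ \frac{\sqrt\Gamma}{3}-3<\theta<1+\frac{\sqrt\Gamma}{3},\ \Gamma<(\Lambda_1/\Lambda_2)^2\}$, - $\mathcal{R}_3=\{0<\theta<1<\eta,\ \frac{\sqrt\Gamma}{3}-3<\theta<1,\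 \Gamma>(\Lambda_1/\Lambda_2)^2\}$, and $\mathcal{R}=\mathcal{R}_1\cup\mathcal{R}_2\cup\mathcal{R}_3$. For $(\eta,\theta)\in\mathcal{R}$, $\phi$ has exactly two critical points in $(0,1)$: a local minimum $u_m$ and a local maximum $u_M>u_m$, giving fold points $P=(u_m,\phi(u_m))$ and $Q=(u_M,\phi(u_M))$. The interior equilibrium is $E_*=(u_*,v_* )$ with $u_*=\sqrt{\delta\eta/(1-\delta)}$ and $v_*=\phi(u_* )$. It lies in the open first quadrant when $\delta<1/(1+\eta)$. *)

From Stdlib Require Import Reals.
From Coquelicot Require Import Coquelicot.
Open Scope R_scope.

(* phi(u) = (1/u)(1-u)(u+theta)(u^2+eta); the critical manifold M_20 is v = phi u, u > 0 *)
Definition phi (theta eta u : R) : R :=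
  / u * (1 - u) * (u + theta) * (u ^ 2 + eta).

Definition Gamma (eta theta : R) : R := 9 * theta ^ 2 + 6 * theta + 9 - 24 * eta.

Definition Lambda1 (eta theta : R) : R :=
  eta / 8 * (theta ^ 2 + 22 / 3 * theta + 1)
  - 1 / 96 * (3 * (1 + theta ^ 4) + 2 * (theta ^ 2 + 4 * eta ^ 2)).

Definition Lambda2 (eta theta : R) : R :=
  (1 - theta) / 288 * (3 * theta ^ 2 + 2 * theta + 3 - 8 * eta).

Definition region1 (eta theta : R) : Prop :=
  0 < eta /\ eta < theta /\ theta <= 1 /\
  sqrt (Gamma eta theta) / 3 - 3 < theta /\ theta < 1 + sqrt (Gamma eta theta) / 3 /\
  Gamma eta theta > (Lambda1 eta theta / Lambda2 eta theta) ^ 2.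

Definition region2 (eta theta : R) : Prop :=
  0 < eta /\ eta < 1 /\ 1 < theta /\
  sqrt (Gamma eta theta) / 3 - 3 < theta /\ theta < 1 + sqrt (Gamma eta theta) / 3 /\
  Gamma eta theta < (Lambda1 eta theta / Lambda2 eta theta) ^ 2.

Definition region3 (eta theta : R) : Prop :=
  0 < theta /\ theta < 1 /\ 1 < eta /\
  sqrt (Gamma eta theta) / 3 - 3 < theta /\ theta < 1 /\
  Gamma eta theta > (Lambda1 eta theta / Lambda2 eta theta) ^ 2.

Definition in_region (eta theta : R) : Prop :=
  region1 eta theta \/ region2 eta theta \/ region3 eta theta.

Definition ustar (delta eta : R) : R := sqrt (delta * eta / (1 - delta)).
Definition vstar (delta theta eta : R) : R := phi theta eta (ustar delta eta).

Definition F1 (theta eta u v : R) : R :=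
  u * (1 - u) * (u + theta) * (u ^ 2 + eta) - u ^ 2 * v.
Definition F2 (delta eta eps u v : R) : R :=
  eps * (u ^ 2 * v - delta * v * (u ^ 2 + eta)).

Definition is_solution (delta theta eta eps : R) (u v : R -> R) : Prop :=
  forall t, 0 <= t ->
    is_derive u t (F1 theta eta (u t) (v t)) /\
    is_derive v t (F2 delta eta eps (u t) (v t)).

Definition lyapunov_stable (delta theta eta eps us vs : R) : Prop :=
  forall e, 0 < e -> exists d, 0 < d /\
    forall u v : R -> R, is_solution delta theta eta eps u v ->
      (u 0 - us) ^ 2 + (v 0 - vs) ^ 2 < d ^ 2 ->
      forall t, 0 <= t -> (u t - us) ^ 2 + (v t - vs) ^ 2 < e ^ 2.

Definition globally_stable (delta theta eta eps us vs : R) : Prop :=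
  lyapunov_stable delta theta eta eps us vs /\
  forall u v : R -> R, is_solution delta theta eta eps u v ->
    0 < u 0 -> 0 < v 0 ->
    is_lim u p_infty us /\ is_lim v p_infty vs.

(* The equilibrium [(s, vs)], with [s = ustar] and [vs = phi s], lies on the branch
   [u > uM] of the critical manifold, where [phi] decreases. The Volterra-type function
   [H = eps (1 - delta) (u + s^2/u - 2 s) + (v - vs - vs ln (v / vs))] satisfies
   [H' = eps (1 - delta) (u^2 - s^2) (phi u - phi s)], which is [<= 0] while [u >= uM].
   An orbit can only leave [u >= uM] with [v >= phi uM], so sublevel sets of [H] below
   [H(uM, phi uM)] are forward invariant: this gives stability. For attraction, an orbit
   either enters [u >= uM, v <= vs], where for small [eps] the value of [H] at the next
   crossing of [v = vs] is already below that level, or it ends up in [u < s], where [v]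
   decreases. In both cases a bounded monotone quantity drops by a fixed amount whenever
   [u] stays away from [s], so [u -> s]; then [u' = u^2 (phi u - v)] forces [v -> vs]. *)

From Stdlib Require Import Reals Lra Psatz Classical List.
Import ListNotations.
From Coquelicot Require Import Coquelicot.
Open Scope R_scope.

(** * Real-analysis preliminaries *)

Lemma ln_le_sub_1 x : 0 < x -> ln x <= x - 1.
Proof. intros Hx. pose proof (exp_ineq1_le (ln x)) as H. rewrite exp_ln in H; lra. Qed.

Lemma ln_lt_sub_1 x : 0 < x -> x <> 1 -> ln x < x - 1.
Proof.
  intros Hx Hx1. assert (Hln : ln x <> 0).
  { intro E. apply Hx1. rewrite <- (exp_ln x Hx), E, exp_0. reflexivity. }
  pose proof (exp_ineq1 (ln x) Hln) as H. rewrite exp_ln in H; lra.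
Qed.

Lemma ln_le_half x : 0 < x -> ln x <= x / 2.
Proof.
  intros Hx. set (r := sqrt x). assert (Hr : 0 < r) by (apply sqrt_lt_R0; lra).
  assert (Ex : x = r * r) by (unfold r; rewrite sqrt_sqrt; lra).
  rewrite Ex, ln_mult by lra. pose proof (ln_le_sub_1 r Hr).
  pose proof (Rle_0_sqr (r - 2)). unfold Rsqr in *. lra.
Qed.

Lemma is_derive_continuity_pt f x l : is_derive f x l -> continuity_pt f x.
Proof.
  intros H. apply is_derive_Reals in H. apply derivable_continuous_pt.
  exact (exist _ l H).
Qed.

Lemma ex_derive_continuity_pt f x : ex_derive f x -> continuity_pt f x.
Proof. intros [l Hl]. exact (is_derive_continuity_pt f x l Hl). Qed.

Lemma continuity_pt_ball f m e : continuity_pt f m -> 0 < e ->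
  exists r, 0 < r /\ forall y, Rabs (y - m) < r -> Rabs (f y - f m) < e.
Proof.
  intros Hc He. destruct (Hc e He) as [r [Hr Hball]]. exists r. split; [exact Hr |].
  intros y Hy. destruct (Req_dec y m) as [-> | Hym]; [rewrite Rminus_diag, Rabs_R0; lra |].
  apply (Hball y). split; [split; [exact I | auto] | exact Hy].
Qed.

Lemma continuity_pt_le_of_near f m c : continuity_pt f m ->
  (forall r, 0 < r -> exists y, Rabs (y - m) < r /\ f y <= c) -> f m <= c.
Proof.
  intros Hc Hnear. apply Rnot_lt_le. intros Hlt.
  destruct (continuity_pt_ball f m (f m - c) Hc ltac:(lra)) as [r [Hr Hball]].
  destruct (Hnear r Hr) as [y [Hy Hfy]].
  specialize (Hball y Hy). apply Rabs_def2 in Hball. lra.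
Qed.

Lemma continuity_pt_ge_of_near f m c : continuity_pt f m ->
  (forall r, 0 < r -> exists y, Rabs (y - m) < r /\ c <= f y) -> c <= f m.
Proof.
  intros Hc Hnear.
  enough (- f m <= - c) by lra.
  apply (continuity_pt_le_of_near (fun x => - f x)); [now apply continuity_pt_opp|].
  intros r Hr. destruct (Hnear r Hr) as [y [Hy Hfy]]. exists y. split; [auto | lra].
Qed.

(* [m] is the infimum of [E] on [[a, b]]; it need not belong to [E]. *)
Lemma first_hit (E : R -> Prop) a b : a <= b -> E b ->
  exists m, a <= m <= b /\ (forall x, a <= x < m -> ~ E x) /\
    forall r, 0 < r -> exists y, m <= y < m + r /\ y <= b /\ E y.
Proof.
  intros Hab Eb.
  set (S x := a <= x <= b /\ forall y, a <= y < x -> ~ E y).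
  assert (Sa : S a) by (split; [lra | intros y Hy; lra]).
  assert (Sbound : bound S) by (exists b; intros x [Hx _]; lra).
  destruct (completeness S Sbound (ex_intro _ a Sa)) as [m [Hub Hlub]].
  assert (Ham : a <= m) by now apply Hub.
  assert (Hmb : m <= b) by (apply Hlub; intros x [Hx _]; lra).
  assert (Hbefore : forall x, a <= x < m -> ~ E x).
  { intros x Hx. destruct (classic (exists e, S e /\ x < e)) as [[e [[_ He] Hxe]] | Hn].
    - apply He. lra.
    - exfalso. enough (m <= x) by lra. apply Hlub. intros e Se.
      destruct (Rle_lt_dec e x); auto. exfalso. apply Hn. now exists e. }
  exists m. split; [lra | split; [exact Hbefore |]].
  intros r Hr. apply NNPP. intros Hn.
  destruct (Req_dec m b) as [-> | Hmb_ne].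
  { apply Hn. exists b. repeat split; try lra; exact Eb. }
  set (x1 := Rmin (m + r / 2) b).
  assert (Hx1 : m < x1 <= b) by (unfold x1; split; [apply Rmin_case | apply Rmin_r]; lra).
  assert (Sx1 : S x1).
  { split; [lra |]. intros y Hy Ey.
    destruct (Rlt_le_dec y m) as [Hym | Hmy]; [now apply (Hbefore y) |].
    apply Hn. exists y. unfold x1 in Hy.
    pose proof (Rmin_l (m + r / 2) b). pose proof (Rmin_r (m + r / 2) b).
    repeat split; auto; lra. }
  pose proof (Hub x1 Sx1). lra.
Qed.

Lemma first_reach f a b c : a < b -> (forall x, a <= x <= b -> continuity_pt f x) ->
  f a < c -> c <= f b ->
  exists s, a < s <= b /\ f s = c /\ forall x, a <= x < s -> f x < c.
Proof.
  intros Hab Hc Ha Hb.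
  destruct (first_hit (fun x => c <= f x) a b ltac:(lra) Hb) as [m [Hm [Hbefore Hafter]]].
  assert (Hbelow : forall x, a <= x < m -> f x < c) by (intros x Hx; apply Rnot_le_lt, Hbefore, Hx).
  assert (Hge : c <= f m).
  { apply continuity_pt_ge_of_near; [apply Hc; lra |].
    intros r Hr. destruct (Hafter r Hr) as [y [Hy [_ Hfy]]].
    exists y. split; [apply Rabs_def1 |]; lra. }
  assert (Ham : a < m) by (destruct (Req_dec a m) as [<- |]; lra).
  assert (Hle : f m <= c).
  { apply continuity_pt_le_of_near; [apply Hc; lra |].
    intros r Hr. exists (Rmax a (m - r / 2)).
    assert (a <= Rmax a (m - r / 2) < m) by (split; [apply Rmax_l | apply Rmax_case]; lra).
    split; [| left; now apply Hbelow].
    pose proof (Rmax_r a (m - r / 2)). apply Rabs_def1; lra. }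
  exists m. repeat split; auto; lra.
Qed.

Lemma first_exit f a b c : a < b -> (forall x, a <= x <= b -> continuity_pt f x) ->
  c <= f a -> f b < c ->
  exists s, a <= s < b /\ f s = c /\ (forall x, a <= x <= s -> c <= f x) /\
    forall r, 0 < r -> exists y, s < y < s + r /\ y <= b /\ f y < c.
Proof.
  intros Hab Hc Ha Hb.
  destruct (first_hit (fun x => f x < c) a b ltac:(lra) Hb) as [m [Hm [Hbefore Hafter]]].
  assert (Habove : forall x, a <= x < m -> c <= f x) by (intros x Hx; apply Rnot_lt_le, Hbefore, Hx).
  assert (Hle : f m <= c).
  { apply continuity_pt_le_of_near; [apply Hc; lra |].
    intros r Hr. destruct (Hafter r Hr) as [y [Hy [_ Hfy]]].
    exists y. split; [apply Rabs_def1 | left]; lra. }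
  assert (Hge : c <= f m).
  { destruct (Req_dec a m) as [<- | Ham]; [exact Ha |].
    apply continuity_pt_ge_of_near; [apply Hc; lra |].
    intros r Hr. exists (Rmax a (m - r / 2)).
    assert (a <= Rmax a (m - r / 2) < m) by (split; [apply Rmax_l | apply Rmax_case]; lra).
    split; [| now apply Habove].
    pose proof (Rmax_r a (m - r / 2)). apply Rabs_def1; lra. }
  assert (Hmb : m < b) by (destruct (Req_dec m b) as [-> |]; lra).
  exists m. split; [lra | split; [lra | split]].
  - intros x Hx. destruct (Req_dec x m) as [-> |]; [lra | apply Habove; lra].
  - intros r Hr. destruct (Hafter r Hr) as [y [Hy [Hyb Hfy]]].
    exists y. repeat split; auto; try lra.
    destruct (Req_dec y m) as [-> |]; lra.
Qed.

Lemma is_derive_pos_local f x l : is_derive f x l -> 0 < l ->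
  exists r, 0 < r /\ (forall y, x < y < x + r -> f x < f y) /\
    (forall y, x - r < y < x -> f y < f x).
Proof.
  intros Hd Hl. apply is_derive_Reals in Hd.
  destruct (Hd (l / 2) ltac:(lra)) as [r Hr].
  assert (Hquot : forall h, h <> 0 -> Rabs h < r -> 0 < (f (x + h) - f x) / h).
  { intros h Hh Hhr. specialize (Hr h Hh Hhr). apply Rabs_def2 in Hr. lra. }
  exists r. split; [apply cond_pos | split].
  - intros y Hy. specialize (Hquot (y - x) ltac:(lra) ltac:(apply Rabs_def1; lra)).
    replace (x + (y - x)) with y in Hquot by ring.
    assert (0 < y - x) by lra.
    apply Rdiv_pos_cases in Hquot. lra.
  - intros y Hy. specialize (Hquot (y - x) ltac:(lra) ltac:(apply Rabs_def1; lra)).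
    replace (x + (y - x)) with y in Hquot by ring.
    apply Rdiv_pos_cases in Hquot. lra.
Qed.

Lemma is_derive_le_0_at_exit f s l : is_derive f s l ->
  (forall r, 0 < r -> exists y, s < y < s + r /\ f y < f s) -> l <= 0.
Proof.
  intros Hd Hexit. apply Rnot_lt_le. intros Hl.
  destruct (is_derive_pos_local f s l Hd Hl) as [r [Hr [Hright _]]].
  destruct (Hexit r Hr) as [y [Hy Hfy]]. specialize (Hright y Hy). lra.
Qed.

Lemma is_derive_ge_0_at_reach f s l r : is_derive f s l -> 0 < r ->
  (forall x, s - r < x < s -> f x < f s) -> 0 <= l.
Proof.
  intros Hd Hr Hbelow. apply Rnot_lt_le. intros Hl.
  assert (Hd' : is_derive (fun x => - f x) s (- l)) by (apply (is_derive_opp f); exact Hd).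
  destruct (is_derive_pos_local _ s (- l) Hd' ltac:(lra)) as [r' [Hr' [_ Hleft]]].
  set (y := s - Rmin r r' / 2).
  assert (0 < Rmin r r' <= r /\ Rmin r r' <= r') by
    (split; [split; [apply Rmin_case | apply Rmin_l] | apply Rmin_r]; lra).
  specialize (Hleft y ltac:(unfold y; lra)). specialize (Hbelow y ltac:(unfold y; lra)). lra.
Qed.

Lemma mvt_upper f df a b K : a <= b -> (forall x, a <= x <= b -> is_derive f x (df x)) ->
  (forall x, a <= x <= b -> df x <= K) -> f b - f a <= K * (b - a).
Proof.
  intros Hab Hd HK. destruct (MVT_gen f a b df) as [c [Hc ->]];
    rewrite ?Rmin_left, ?Rmax_right in * by lra.
  - intros x Hx. apply Hd; lra.
  - intros x Hx. apply (is_derive_continuity_pt _ _ (df x)), Hd; lra.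
  - apply Rmult_le_compat_r; [lra | apply HK; lra].
Qed.

Lemma mvt_lower f df a b K : a <= b -> (forall x, a <= x <= b -> is_derive f x (df x)) ->
  (forall x, a <= x <= b -> K <= df x) -> K * (b - a) <= f b - f a.
Proof.
  intros Hab Hd HK.
  assert (Hopp : - f b - - f a <= - K * (b - a)).
  { apply (mvt_upper (fun x => - f x) (fun x => - df x)); auto.
    - intros x Hx. apply (is_derive_opp f), Hd, Hx.
    - intros x Hx. specialize (HK x Hx). lra. }
  lra.
Qed.

Lemma lipschitz_of_derive f df a z L : a <= z ->
  (forall x, a <= x <= z -> is_derive f x (df x)) ->
  (forall x, a <= x <= z -> Rabs (df x) <= L) -> Rabs (f z - f a) <= L * (z - a).
Proof.
  intros Haz Hd HL. apply Rabs_le. split.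
  - enough (- L * (z - a) <= f z - f a) by lra.
    apply (mvt_lower f df); auto.
    intros x Hx. pose proof (proj1 (Rabs_le_between _ _) (HL x Hx)). lra.
  - apply (mvt_upper f df); auto.
    intros x Hx. pose proof (proj1 (Rabs_le_between _ _) (HL x Hx)). lra.
Qed.

Lemma window_of_lipschitz (f : R -> R) T L : 0 < L ->
  (forall t z, T <= t <= z -> Rabs (f z - f t) <= L * (z - t)) ->
  forall g, 0 < g -> exists tau, 0 < tau /\
    forall t z, T <= t <= z -> z <= t + tau -> Rabs (f z - f t) <= g.
Proof.
  intros HL Hlip g Hg. exists (g / L). split; [apply Rdiv_lt_0_compat; lra |].
  intros t z Htz Hz. eapply Rle_trans; [apply Hlip, Htz |].
  apply Rmult_le_reg_r with (/ L); [apply Rinv_0_lt_compat; lra |].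
  replace (L * (z - t) * / L) with (z - t) by (field; lra). unfold Rdiv in Hz. lra.
Qed.

Lemma nonincr_bounded_no_repeated_drops (G : R -> R) T lb D : 0 < D ->
  (forall x y, T <= x <= y -> G y <= G x) -> (forall x, T <= x -> lb <= G x) ->
  ~ (forall x, T <= x -> exists y, x <= y /\ G y <= G x - D).
Proof.
  intros HD Hmono Hlb Hstep.
  assert (Hn : forall n : nat, exists t, T <= t /\ G t <= G T - INR n * D).
  { induction n as [| n [t [Ht HG]]]; [exists T; simpl; split; lra |].
    destruct (Hstep t Ht) as [y [Hy HGy]]. exists y. rewrite S_INR. split; lra. }
  destruct (INR_archimed D (G T - lb) HD) as [n Hn'].
  destruct (Hn n) as [t [Ht HG]]. specialize (Hlb t Ht). lra.
Qed.

Lemma exists_pos_le_all (l : list R) : List.Forall (fun a => 0 < a) l ->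
  exists r, 0 < r /\ List.Forall (fun a => r <= a) l.
Proof.
  induction 1 as [| a l Ha _ [r [Hr Hle]]]; [exists 1; split; [lra | constructor] |].
  exists (Rmin a r). split; [now apply Rmin_pos |]. constructor; [apply Rmin_l |].
  eapply Forall_impl; [| exact Hle]. intros b Hb. pose proof (Rmin_r a r). lra.
Qed.

Lemma sq_lt_abs x r : 0 < r -> x ^ 2 < r ^ 2 -> Rabs x < r.
Proof.
  intros Hr H. apply Rnot_le_lt. intros Hle. rewrite <- (pow2_abs x) in H.
  pose proof (pow_incr r (Rabs x) 2 ltac:(lra)). lra.
Qed.

Definition converges (f : R -> R) (l : R) : Prop :=
  forall e, 0 < e -> exists T, forall t, T <= t -> Rabs (f t - l) < e.

Lemma converges_is_lim f l : converges f l -> is_lim f p_infty l.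
Proof.
  intros H. apply is_lim_spec. intros e. destruct (H e (cond_pos e)) as [T HT].
  exists T. intros x Hx. apply HT. lra.
Qed.

Lemma not_converges f l : ~ converges f l ->
  exists g, 0 < g /\ forall T, exists t, T <= t /\ g <= Rabs (f t - l).
Proof.
  intros Hn. apply not_all_ex_not in Hn as [g Hg]. apply imply_to_and in Hg as [Hg Hg'].
  exists g. split; auto. intros T. apply NNPP. intros Hc. apply Hg'. exists T.
  intros t Ht. apply Rnot_le_lt. intros Hle. apply Hc. now exists t.
Qed.

(* A quantitative substitute for LaSalle's invariance principle. *)
Lemma converges_of_uniform_drops (f G : R -> R) l T lb :
  (forall x y, T <= x <= y -> G y <= G x) -> (forall x, T <= x -> lb <= G x) ->
  (forall g, 0 < g -> exists D, 0 < D /\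
     forall t, T <= t -> g <= Rabs (f t - l) -> exists t', t <= t' /\ G t' <= G t - D) ->
  converges f l.
Proof.
  intros Hmono Hlb Hdrop. apply NNPP. intros Hn.
  destruct (not_converges f l Hn) as [g [Hg Hfar]].
  destruct (Hdrop g Hg) as [D [HD HstepD]].
  apply (nonincr_bounded_no_repeated_drops G T lb D HD Hmono Hlb).
  intros x Hx. destruct (Hfar x) as [t [Ht Hft]].
  destruct (HstepD t ltac:(lra) Hft) as [t' [Ht' HGt']].
  exists t'. split; [lra |]. pose proof (Hmono x t ltac:(lra)). lra.
Qed.

(* If [y' = g y] with [g] continuous, then [y e^(K t)] is nondecreasing as long as [y >= 0]
   and [g >= -K], so [y] cannot reach [0]. *)
Lemma pos_of_linear_ode (y g : R -> R) :
  (forall t, 0 <= t -> is_derive y t (y t * g t)) ->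
  (forall t, 0 <= t -> continuity_pt g t) -> 0 < y 0 ->
  forall t, 0 <= t -> 0 < y t.
Proof.
  intros Hd Hg Hy0 t1 Ht1. apply Rnot_le_lt. intros Hle.
  assert (Ht1' : 0 < t1) by (destruct (Req_dec t1 0) as [-> |]; lra).
  destruct (first_reach (fun t => - y t) 0 t1 0) as [s0 [Hs0 [Hys0 Hbefore]]]; try lra.
  { intros x Hx. apply continuity_pt_opp, (is_derive_continuity_pt _ _ (y x * g x)), Hd. lra. }
  assert (Hnn : forall t, 0 <= t <= s0 -> 0 <= y t).
  { intros t Ht. destruct (Req_dec t s0) as [-> |]; [lra |]. specialize (Hbefore t ltac:(lra)). lra. }
  destruct (continuity_ab_min g 0 s0 ltac:(lra)) as [tm [Hmin _]].
  { intros c Hc. apply Hg. lra. }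
  set (K := - g tm).
  set (z t := y t * exp (K * t)).
  assert (Hz : forall t, 0 <= t <= s0 -> is_derive z t (y t * exp (K * t) * (g t + K))).
  { intros t Ht. unfold z.
    assert (He : is_derive (fun t => exp (K * t)) t (K * exp (K * t))) by (auto_derive; auto; ring).
    replace (y t * exp (K * t) * (g t + K)) with (y t * g t * exp (K * t) + y t * (K * exp (K * t))) by ring.
    apply (is_derive_mult y (fun t => exp (K * t))); [apply Hd; lra | exact He | intros; apply Rmult_comm]. }
  assert (Hzmono : 0 * (s0 - 0) <= z s0 - z 0).
  { apply (mvt_lower z _ 0 s0 0 ltac:(lra) Hz). intros x Hx.
    pose proof (Hmin x Hx). pose proof (Hnn x Hx). pose proof (exp_pos (K * x)).
    apply Rmult_le_pos; [apply Rmult_le_pos; lra | unfold K; lra]. }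
  unfold z in Hzmono. replace (y s0) with 0 in Hzmono by lra.
  rewrite Rmult_0_r, exp_0 in Hzmono. lra.
Qed.

(** * The critical manifold and the Lyapunov function *)

Definition dphi th et u := - 3 * u ^ 2 + 2 * (1 - th) * u + (th - et) - th * et / u ^ 2.

Lemma phi_derive th et u : 0 < u -> is_derive (phi th et) u (dphi th et u).
Proof. intros Hu. unfold phi, dphi. auto_derive; [lra | field; lra]. Qed.

Lemma dphi_lt_0_ge_1 th et u : 0 < th -> 0 < et -> 1 <= u -> dphi th et u < 0.
Proof.
  intros Ht He Hu. unfold dphi.
  assert (0 < th * et / u ^ 2) by (apply Rdiv_lt_0_compat; [nra | apply pow_lt; lra]).
  nra.
Qed.

Lemma dphi_continuity_pt th et u : 0 < u -> continuity_pt (dphi th et) u.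
Proof.
  intros Hu. assert (ex_derive (dphi th et) u) as [l Hl].
  { unfold dphi. auto_derive. apply Rgt_not_eq. nra. }
  exact (is_derive_continuity_pt _ _ _ Hl).
Qed.

(* [dphi] is negative at [1], so a positive value right of [uM] would give, by the
   intermediate value theorem, a critical point in [(uM, 1)]. *)
Lemma dphi_lt_0_right_of_uM th et uM : 0 < th -> 0 < et -> 0 < uM < 1 ->
  (forall u, 0 < u < 1 -> is_derive (phi th et) u 0 -> u <= uM) ->
  forall u, uM < u -> dphi th et u < 0.
Proof.
  intros Ht He HuM Hcrit u Hu.
  destruct (Rle_lt_dec 1 u) as [H1 | H1]; [now apply dphi_lt_0_ge_1 |].
  assert (Hnot_crit : forall z, u <= z < 1 -> dphi th et z <> 0).
  { intros z Hz E. assert (Hz0 : is_derive (phi th et) z 0) by (rewrite <- E; apply phi_derive; lra).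
    specialize (Hcrit z ltac:(lra) Hz0). lra. }
  destruct (Rtotal_order (dphi th et u) 0) as [Hlt | [Heq | Hgt]]; auto.
  - now exfalso; apply (Hnot_crit u); [lra |].
  - exfalso. pose proof (dphi_lt_0_ge_1 th et 1 Ht He (Rle_refl 1)).
    destruct (Ranalysis5.IVT_interv (fun x => - dphi th et x) u 1) as [z [Hz Ez]]; try lra.
    { intros x Hx. apply continuity_pt_opp, dphi_continuity_pt. lra. }
    assert (z <> 1) by (intros ->; lra).
    apply (Hnot_crit z); lra.
Qed.

Lemma phi_decr_right_of_uM th et uM : 0 < th -> 0 < et -> 0 < uM < 1 ->
  is_derive (phi th et) uM 0 ->
  (forall u, 0 < u < 1 -> is_derive (phi th et) u 0 -> u <= uM) ->
  forall x y, uM <= x < y -> phi th et y < phi th et x.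
Proof.
  intros Ht He HuM HduM Hcrit x y Hxy.
  pose proof (dphi_lt_0_right_of_uM th et uM Ht He HuM Hcrit) as Hneg.
  assert (Hd0 : dphi th et uM = 0).
  { rewrite <- (is_derive_unique _ _ _ HduM). symmetry.
    apply is_derive_unique, phi_derive. lra. }
  set (m := (x + y) / 2).
  assert (Hleft : phi th et m - phi th et x <= 0 * (m - x)).
  { apply (mvt_upper _ (dphi th et)); [unfold m; lra | |].
    - intros z Hz. apply phi_derive. lra.
    - intros z Hz. destruct (Req_dec z uM) as [-> | ]; [lra | left; apply Hneg; lra]. }
  destruct (MVT_gen (phi th et) m y (dphi th et)) as [c [Hc Hright]];
    rewrite ?Rmin_left, ?Rmax_right in * by (unfold m; lra).
  - intros z Hz. apply phi_derive. unfold m in Hz. lra.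
  - intros z Hz. apply (is_derive_continuity_pt _ _ (dphi th et z)), phi_derive. unfold m in Hz. lra.
  - assert (dphi th et c < 0) by (apply Hneg; unfold m in Hc; lra).
    assert (0 < y - m) by (unfold m; lra). nra.
Qed.

Lemma phi_lower_bound th et s u : 0 < th -> 0 < et -> 0 < u <= s -> s < 1 ->
  (1 - s) * th * et / s <= phi th et u.
Proof.
  intros Ht He Hu Hs. unfold phi, Rdiv.
  assert (Hinv : / s <= / u) by (apply Rinv_le_contravar; lra).
  assert (0 < / s) by (apply Rinv_0_lt_compat; lra).
  assert (Hprod : (1 - s) * (th * et) <= (1 - u) * ((u + th) * (u ^ 2 + et))).
  { apply Rmult_le_compat; nra. }
  replace (/ u * (1 - u) * (u + th) * (u ^ 2 + et)) with ((1 - u) * ((u + th) * (u ^ 2 + et)) * / u) by ring.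
  replace ((1 - s) * th * et * / s) with ((1 - s) * (th * et) * / s) by ring.
  apply Rmult_le_compat; try lra. apply Rmult_le_pos; nra.
Qed.

Lemma F1_factor th et u v : 0 < u -> F1 th et u v = u ^ 2 * (phi th et u - v).
Proof. intros Hu. unfold F1, phi. field. lra. Qed.

Lemma F1_lt_0_ge_1 th et x y : 0 < th -> 0 < et -> 1 <= x -> 0 < y -> F1 th et x y < 0.
Proof.
  intros Ht He Hx Hy. unfold F1.
  assert (0 < (x + th) * (x ^ 2 + et)) by (apply Rmult_lt_0_compat; nra).
  assert (0 < x ^ 2 * y) by (apply Rmult_lt_0_compat; nra).
  assert (x * (1 - x) <= 0) by nra.
  replace (x * (1 - x) * (x + th) * (x ^ 2 + et)) with (x * (1 - x) * ((x + th) * (x ^ 2 + et))) by ring.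
  nra.
Qed.

Lemma F1_abs_le th et x y V : 0 < th -> 0 < et -> 0 < x <= 2 -> 0 < y <= V ->
  Rabs (F1 th et x y) <= 2 * (2 + th) * (4 + et) + 4 * V.
Proof.
  intros Ht He Hx Hy. unfold F1. apply Rabs_le.
  set (P := x * ((x + th) * (x ^ 2 + et))).
  assert (0 <= P) by (unfold P; apply Rmult_le_pos; [lra | apply Rmult_le_pos; nra]).
  assert (P <= 2 * ((2 + th) * (4 + et))) by
    (unfold P; apply Rmult_le_compat; try lra; [apply Rmult_le_pos; nra | apply Rmult_le_compat; nra]).
  replace (x * (1 - x) * (x + th) * (x ^ 2 + et)) with ((1 - x) * P) by (unfold P; ring).
  assert (0 <= x ^ 2 * y <= 4 * V) by (split; [apply Rmult_le_pos; nra | apply Rmult_le_compat; nra]).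
  assert (- P <= (1 - x) * P <= P) by (split; nra).
  lra.
Qed.

Lemma ustar_spec delta eta : 0 < delta -> 0 < eta -> delta < / (1 + eta) ->
  0 < ustar delta eta < 1 /\ delta * (eta + ustar delta eta ^ 2) = ustar delta eta ^ 2.
Proof.
  intros Hd He Hdel.
  assert (Hd1 : delta * (1 + eta) < 1).
  { apply Rmult_lt_compat_r with (r := 1 + eta) in Hdel; [| lra]. rewrite Rinv_l in Hdel; lra. }
  set (q := delta * eta / (1 - delta)).
  assert (Hq : 0 < q < 1).
  { unfold q. split; [apply Rdiv_lt_0_compat; nra |].
    apply Rmult_lt_reg_r with (1 - delta); [nra |].
    unfold Rdiv. rewrite Rmult_assoc, Rinv_l; nra. }
  assert (Hsq : ustar delta eta ^ 2 = q).
  { unfold ustar. fold q. rewrite <- Rsqr_pow2. apply Rsqr_sqrt. lra. }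
  unfold ustar at 1 2. fold q. rewrite Hsq. repeat split.
  - apply sqrt_lt_R0. lra.
  - rewrite <- sqrt_1. apply sqrt_lt_1; lra.
  - unfold q. field. nra.
Qed.

(* Volterra-type Lyapunov function: [lyap_u] and [lyap_v] are the integrals of
   [1 - s^2 / x^2] and [1 - vs / y] from the equilibrium, and the weight [eps (1 - d)]
   makes the terms containing [v] cancel in its derivative along trajectories. *)
Definition lyap_u s x := x + s ^ 2 / x - 2 * s.
Definition lyap_v vs y := y - vs - vs * ln (y / vs).
Definition lyap d eps s vs x y := eps * (1 - d) * lyap_u s x + lyap_v vs y.

Lemma lyap_u_eq s x : 0 < x -> lyap_u s x = (x - s) ^ 2 / x.
Proof. intros Hx. unfold lyap_u. field. lra. Qed.

Lemma lyap_u_nonneg s x : 0 < x -> 0 <= lyap_u s x.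
Proof. intros Hx. rewrite lyap_u_eq by exact Hx. apply Rdiv_le_0_compat; [apply pow2_ge_0 | exact Hx]. Qed.

Lemma lyap_u_derive s x : 0 < x -> is_derive (lyap_u s) x (1 - s ^ 2 / x ^ 2).
Proof. intros Hx. unfold lyap_u. auto_derive; [lra | field; lra]. Qed.

Lemma lyap_v_derive vs y : 0 < vs -> 0 < y -> is_derive (lyap_v vs) y (1 - vs / y).
Proof. intros Hvs Hy. unfold lyap_v. auto_derive; [apply Rdiv_lt_0_compat; lra | field; lra]. Qed.

Lemma lyap_v_pos vs y : 0 < vs -> 0 < y -> y <> vs -> 0 < lyap_v vs y.
Proof.
  intros Hvs Hy Hne. unfold lyap_v.
  assert (Hq : y / vs <> 1) by (intros E; apply Hne; field_simplify_eq in E; lra).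
  pose proof (ln_lt_sub_1 (y / vs) ltac:(apply Rdiv_lt_0_compat; lra) Hq).
  assert (vs * ln (y / vs) < vs * (y / vs - 1)) by (apply Rmult_lt_compat_l; lra).
  replace (vs * (y / vs - 1)) with (y - vs) in * by (field; lra). lra.
Qed.

Lemma lyap_v_nonneg vs y : 0 < vs -> 0 < y -> 0 <= lyap_v vs y.
Proof.
  intros Hvs Hy. destruct (Req_dec y vs) as [-> |].
  - unfold lyap_v. rewrite Rdiv_diag, ln_1 by lra. lra.
  - left. now apply lyap_v_pos.
Qed.

Lemma lyap_v_le vs y : 0 < vs -> 0 < y -> lyap_v vs y <= (y - vs) ^ 2 / y.
Proof.
  intros Hvs Hy. unfold lyap_v.
  pose proof (ln_le_sub_1 (vs / y) ltac:(apply Rdiv_lt_0_compat; lra)) as Hln.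
  rewrite ln_div in Hln by lra. rewrite ln_div by lra.
  assert (vs * (ln vs - ln y) <= vs * (vs / y - 1)) by (apply Rmult_le_compat_l; lra).
  replace ((y - vs) ^ 2 / y) with (y - 2 * vs + vs * (vs / y)) by (field; lra). nra.
Qed.

Lemma lyap_v_incr vs a b : 0 < vs -> vs <= a <= b -> lyap_v vs a <= lyap_v vs b.
Proof.
  intros Hvs Hab.
  enough (0 * (b - a) <= lyap_v vs b - lyap_v vs a) by lra.
  apply (mvt_lower _ (fun y => 1 - vs / y)); [lra | |].
  - intros y Hy. apply lyap_v_derive; lra.
  - intros y Hy. enough (vs / y <= 1) by lra.
    apply Rmult_le_reg_r with y; [lra |]. field_simplify; lra.
Qed.

Lemma lyap_v_decr vs a b : 0 < vs -> 0 < a <= b -> b <= vs -> lyap_v vs b <= lyap_v vs a.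
Proof.
  intros Hvs Hab Hb.
  enough (lyap_v vs b - lyap_v vs a <= 0 * (b - a)) by lra.
  apply (mvt_upper _ (fun y => 1 - vs / y)); [lra | |].
  - intros y Hy. apply lyap_v_derive; lra.
  - intros y Hy. enough (1 <= vs / y) by lra.
    apply Rmult_le_reg_r with y; [lra |]. field_simplify; lra.
Qed.

Lemma lyap_v_bound vs y C : 0 < vs -> 0 < y -> lyap_v vs y <= C -> y <= 2 * (C + vs).
Proof.
  intros Hvs Hy HC. unfold lyap_v in HC.
  pose proof (ln_le_half (y / vs) ltac:(apply Rdiv_lt_0_compat; lra)).
  assert (vs * ln (y / vs) <= vs * (y / vs / 2)) by (apply Rmult_le_compat_l; lra).
  replace (vs * (y / vs / 2)) with (y / 2) in * by (field; lra). lra.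
Qed.

(** * Trajectories *)

Lemma solution_pos d th et eps u v : is_solution d th et eps u v -> 0 < u 0 -> 0 < v 0 ->
  forall t, 0 <= t -> 0 < u t /\ 0 < v t.
Proof.
  intros Hsol Hu0 Hv0.
  assert (Hdu : forall t, 0 <= t -> ex_derive u t) by (intros t Ht; eexists; apply (Hsol t Ht)).
  assert (Hdv : forall t, 0 <= t -> ex_derive v t) by (intros t Ht; eexists; apply (Hsol t Ht)).
  intros t Ht. split; revert t Ht.
  - apply (pos_of_linear_ode u (fun t => (1 - u t) * (u t + th) * (u t ^ 2 + et) - u t * v t)); auto.
    + intros t Ht. replace (u t * _) with (F1 th et (u t) (v t)) by (unfold F1; ring). apply (Hsol t Ht).
    + intros t Ht. apply ex_derive_continuity_pt. auto_derive. repeat split; auto.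
  - apply (pos_of_linear_ode v (fun t => eps * (u t ^ 2 - d * (u t ^ 2 + et)))); auto.
    + intros t Ht. replace (v t * _) with (F2 d et eps (u t) (v t)) by (unfold F2; ring). apply (Hsol t Ht).
    + intros t Ht. apply ex_derive_continuity_pt. auto_derive. auto.
Qed.

Section Model.

Variables d th et uM s : R.
Hypothesis Hd : 0 < d.
Hypothesis Hth : 0 < th.
Hypothesis Het : 0 < et.
Hypothesis HuM : 0 < uM.
Hypothesis HuMs : uM < s.
Hypothesis Hs1 : s < 1.
Hypothesis Hds : d * (et + s ^ 2) = s ^ 2.
Hypothesis Hdecr : forall x y, uM <= x < y -> phi th et y < phi th et x.

Local Notation vs := (phi th et s).

Lemma d_lt_1 : d < 1.
Proof. nra. Qed.

Lemma phi_decr_le x y : uM <= x <= y -> phi th et y <= phi th et x.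
Proof. intros Hxy. destruct (Req_dec x y) as [-> |]; [lra | left; apply Hdecr; lra]. Qed.

Lemma vs_pos : 0 < vs.
Proof.
  pose proof (phi_lower_bound th et s s Hth Het ltac:(lra) Hs1).
  enough (0 < (1 - s) * th * et / s) by lra.
  apply Rdiv_lt_0_compat; [apply Rmult_lt_0_compat; [apply Rmult_lt_0_compat |] |]; lra.
Qed.

Lemma vs_lt_phi_uM : vs < phi th et uM.
Proof. apply Hdecr. lra. Qed.

Lemma F2_factor eps x y : F2 d et eps x y = eps * (1 - d) * y * (x ^ 2 - s ^ 2).
Proof.
  assert (Hd' : d = s ^ 2 / (et + s ^ 2)) by (field_simplify_eq; nra).
  unfold F2. rewrite Hd'. field. nra.
Qed.

Lemma dissipation_nonpos x : uM <= x -> (x ^ 2 - s ^ 2) * (phi th et x - vs) <= 0.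
Proof.
  intros Hx. destruct (Rle_lt_dec x s).
  - pose proof (phi_decr_le x s ltac:(lra)). assert (x ^ 2 - s ^ 2 <= 0) by nra. nra.
  - pose proof (phi_decr_le s x ltac:(lra)). assert (0 <= x ^ 2 - s ^ 2) by nra. nra.
Qed.

Lemma dissipation_bound g : 0 < g -> exists c, 0 < c /\
  forall x, uM <= x -> g <= Rabs (x - s) -> (x ^ 2 - s ^ 2) * (phi th et x - vs) <= - c.
Proof.
  intros Hg. destruct (exists_pos_le_all [g; s - uM]) as [g' [Hg' Hle]]; [repeat constructor; lra |].
  rewrite !Forall_cons_iff in Hle. destruct Hle as (Hgg' & HuMg' & _).
  assert (Hp1 : vs < phi th et (s - g')) by (apply Hdecr; lra).
  assert (Hp2 : phi th et (s + g') < vs) by (apply Hdecr; lra).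
  destruct (exists_pos_le_all [(s ^ 2 - (s - g') ^ 2) * (phi th et (s - g') - vs);
                               ((s + g') ^ 2 - s ^ 2) * (vs - phi th et (s + g'))]) as [c [Hc Hle]].
  { repeat constructor; apply Rmult_lt_0_compat; nra. }
  rewrite !Forall_cons_iff in Hle. destruct Hle as (Hc1 & Hc2 & _).
  exists c. split; [exact Hc |]. intros x Hx Hfar. destruct (Rle_lt_dec 0 (x - s)) as [Hpos | Hneg].
  - rewrite Rabs_right in Hfar by lra.
    pose proof (phi_decr_le (s + g') x ltac:(lra)).
    assert ((s + g') ^ 2 - s ^ 2 <= x ^ 2 - s ^ 2) by nra.
    assert (((s + g') ^ 2 - s ^ 2) * (vs - phi th et (s + g')) <= (x ^ 2 - s ^ 2) * (vs - phi th et x))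
      by (apply Rmult_le_compat; nra).
    nra.
  - rewrite Rabs_left in Hfar by lra.
    pose proof (phi_decr_le x (s - g') ltac:(lra)).
    assert (s ^ 2 - (s - g') ^ 2 <= s ^ 2 - x ^ 2) by nra.
    assert ((s ^ 2 - (s - g') ^ 2) * (phi th et (s - g') - vs) <= (s ^ 2 - x ^ 2) * (phi th et x - vs))
      by (apply Rmult_le_compat; nra).
    nra.
Qed.

Lemma lyap_v_le_lyap eps x y : 0 < eps -> 0 < x -> lyap_v vs y <= lyap d eps s vs x y.
Proof.
  intros Heps Hx. unfold lyap. pose proof (lyap_u_nonneg s x Hx). pose proof d_lt_1.
  assert (0 <= eps * (1 - d) * lyap_u s x) by (apply Rmult_le_pos; [apply Rmult_le_pos |]; lra). lra.
Qed.

Section Trajectory.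

Variable eps : R.
Variables u v : R -> R.
Hypothesis Heps : 0 < eps.
Hypothesis Hsol : is_solution d th et eps u v.
Hypothesis Hpos : forall t, 0 <= t -> 0 < u t /\ 0 < v t.

Lemma u_derive t : 0 <= t -> is_derive u t (F1 th et (u t) (v t)).
Proof. intros Ht. apply (Hsol t Ht). Qed.

Lemma v_derive t : 0 <= t -> is_derive v t (F2 d et eps (u t) (v t)).
Proof. intros Ht. apply (Hsol t Ht). Qed.

Lemma u_continuity_pt t : 0 <= t -> continuity_pt u t.
Proof. intros Ht. exact (is_derive_continuity_pt _ _ _ (u_derive t Ht)). Qed.

Lemma v_continuity_pt t : 0 <= t -> continuity_pt v t.
Proof. intros Ht. exact (is_derive_continuity_pt _ _ _ (v_derive t Ht)). Qed.

Lemma lyap_derive t : 0 <= t ->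
  is_derive (fun t => lyap d eps s vs (u t) (v t)) t
    (eps * (1 - d) * (u t ^ 2 - s ^ 2) * (phi th et (u t) - vs)).
Proof.
  intros Ht. destruct (Hpos t Ht) as [Hu Hv]. pose proof vs_pos as Hvs.
  pose proof (is_derive_comp _ _ t _ _ (lyap_u_derive s (u t) Hu) (u_derive t Ht)) as Hlu.
  pose proof (is_derive_comp _ _ t _ _ (lyap_v_derive vs (v t) Hvs Hv) (v_derive t Ht)) as Hlv.
  unfold lyap.
  replace (eps * (1 - d) * (u t ^ 2 - s ^ 2) * (phi th et (u t) - vs))
    with (eps * (1 - d) * (F1 th et (u t) (v t) * (1 - s ^ 2 / u t ^ 2))
          + F2 d et eps (u t) (v t) * (1 - vs / v t)).
  - apply (is_derive_plus (fun t => eps * (1 - d) * lyap_u s (u t)) (fun t => lyap_v vs (v t)));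
      [apply (is_derive_scal (fun t => lyap_u s (u t))) |]; assumption.
  - rewrite F2_factor, F1_factor by exact Hu. field. lra.
Qed.

Lemma lyap_nonincr a b : 0 <= a <= b -> (forall x, a <= x <= b -> uM <= u x) ->
  lyap d eps s vs (u b) (v b) <= lyap d eps s vs (u a) (v a).
Proof.
  intros Hab HuMx.
  enough (lyap d eps s vs (u b) (v b) - lyap d eps s vs (u a) (v a) <= 0 * (b - a)) by lra.
  apply (mvt_upper (fun t => lyap d eps s vs (u t) (v t))
    (fun t => eps * (1 - d) * (u t ^ 2 - s ^ 2) * (phi th et (u t) - vs))); [lra | |].
  - intros x Hx. apply lyap_derive. lra.
  - intros x Hx. pose proof (dissipation_nonpos (u x) (HuMx x Hx)). pose proof d_lt_1.
    assert (Hk : 0 <= eps * (1 - d)) by (apply Rmult_le_pos; lra).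
    rewrite Rmult_assoc. apply Rmult_le_0_l; assumption.
Qed.

Lemma u_le_max_1 T t : 0 <= T <= t -> u t <= Rmax (u T) 1.
Proof.
  intros HTt. apply Rnot_lt_le. intros Hgt.
  pose proof (Rmax_l (u T) 1). pose proof (Rmax_r (u T) 1).
  assert (T < t) by (destruct (Req_dec T t) as [-> |]; lra).
  destruct (first_reach u T t (u t)) as [t0 [Ht0 [Hut0 Hbefore]]]; try lra.
  { intros x Hx. apply u_continuity_pt. lra. }
  assert (HF : 0 <= F1 th et (u t0) (v t0)).
  { apply (is_derive_ge_0_at_reach u t0 _ (t0 - T)); [apply u_derive; lra | lra |].
    intros x Hx. rewrite Hut0. apply Hbefore. lra. }
  pose proof (F1_lt_0_ge_1 th et (u t0) (v t0) Hth Het ltac:(lra) (proj2 (Hpos t0 ltac:(lra)))).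
  lra.
Qed.

(* While [u > 2] we have [u' <= -1], so [u] cannot stay above [2] past time [u 0]. *)
Lemma u_eventually_le_2 : exists T, 0 <= T /\ forall t, T <= t -> u t <= 2.
Proof.
  assert (exists T, 0 <= T /\ u T <= 2) as [T [HT HuT]].
  { apply NNPP. intros Hn.
    assert (Hall : forall T, 0 <= T -> 2 < u T)
      by (intros T HT; apply Rnot_le_lt; intros Hle; apply Hn; now exists T).
    pose proof (Hpos 0 (Rle_refl 0)) as [Hu0 _].
    assert (Hdrop : u (u 0) - u 0 <= - 1 * (u 0 - 0)).
    { apply (mvt_upper u (fun t => F1 th et (u t) (v t))); [lra | intros x Hx; apply u_derive; lra |].
      intros x Hx. specialize (Hall x ltac:(lra)). pose proof (Hpos x ltac:(lra)) as [_ Hv].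
      unfold F1. set (w := u x) in *.
      assert (16 <= w * (w + th) * (w ^ 2 + et)).
      { assert (4 <= w * (w + th)) by nra. assert (4 <= w ^ 2 + et) by nra. nra. }
      assert (0 <= w ^ 2 * v x) by (apply Rmult_le_pos; nra).
      replace (w * (1 - w) * (w + th) * (w ^ 2 + et)) with ((1 - w) * (w * (w + th) * (w ^ 2 + et))) by ring.
      nra. }
    specialize (Hall (u 0) ltac:(lra)). lra. }
  exists T. split; [exact HT |]. intros t Ht.
  pose proof (u_le_max_1 T t ltac:(lra)) as Hmax. revert Hmax. apply Rmax_case; intros; lra.
Qed.

Lemma u_exit_time t1 t : 0 <= t1 <= t -> uM <= u t1 -> u t < uM ->
  exists t0, t1 <= t0 < t /\ (forall x, t1 <= x <= t0 -> uM <= u x) /\ phi th et uM <= v t0.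
Proof.
  intros Ht Hu1 Hut.
  assert (t1 < t) by (destruct (Req_dec t1 t) as [-> |]; lra).
  destruct (first_exit u t1 t uM) as [t0 [Ht0 [Hut0 [Habove Hexit]]]]; try lra.
  { intros x Hx. apply u_continuity_pt. lra. }
  assert (HF : F1 th et (u t0) (v t0) <= 0).
  { apply (is_derive_le_0_at_exit u t0); [apply u_derive; lra |].
    intros r Hr. destruct (Hexit r Hr) as [y [Hy [_ Huy]]]. exists y. split; [exact Hy | lra]. }
  rewrite F1_factor, Hut0 in HF by lra.
  assert (0 < uM ^ 2) by (apply pow_lt; lra).
  exists t0. repeat split; auto; try lra. nra.
Qed.

(* On the exit time from [u >= uM] we have [v >= phi uM], so [lyap_v] alone exceeds the
   initial (nonincreasing) value of the Lyapunov function. *)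
Lemma u_stays_ge_uM t1 : 0 <= t1 -> uM <= u t1 ->
  lyap d eps s vs (u t1) (v t1) < lyap_v vs (phi th et uM) ->
  forall t, t1 <= t -> uM <= u t.
Proof.
  intros Ht1 Hu1 Hlyap t Ht. apply Rnot_lt_le. intros Hlt.
  destruct (u_exit_time t1 t ltac:(lra) Hu1 Hlt) as [t0 [Ht0 [Habove Hv0]]].
  pose proof vs_lt_phi_uM. pose proof vs_pos.
  pose proof (lyap_v_incr vs (phi th et uM) (v t0) ltac:(lra) ltac:(lra)).
  pose proof (lyap_v_le_lyap eps (u t0) (v t0) Heps (proj1 (Hpos t0 ltac:(lra)))).
  pose proof (lyap_nonincr t1 t0 ltac:(lra) Habove).
  lra.
Qed.

(* If [u] left [u >= uM] after a time where [v <= vs], then [v] crossed [vs] before,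
   at a time where the Lyapunov function is [O(eps)]. *)
Lemma u_stays_ge_uM_from_below_vs T t1 :
  eps < lyap_v vs (phi th et uM) * uM / 4 -> 0 <= T <= t1 ->
  (forall t, T <= t -> u t <= 2) -> uM <= u t1 -> v t1 <= vs ->
  forall t, t1 <= t -> uM <= u t.
Proof.
  intros Heps0 HT Hle2 Hu1 Hv1 t Ht. apply Rnot_lt_le. intros Hlt.
  pose proof vs_pos as Hvs. pose proof vs_lt_phi_uM. pose proof d_lt_1.
  destruct (u_exit_time t1 t ltac:(lra) Hu1 Hlt) as [t0 [Ht0 [Habove Hv0]]].
  assert (exists t3, t1 <= t3 <= t0 /\ v t3 = vs) as [t3 [Ht3 Hvt3]].
  { destruct (Req_dec (v t1) vs) as [E | Hne]; [exists t1; split; [lra | exact E] |].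
    assert (t1 < t0) by (destruct (Req_dec t1 t0) as [<- |]; lra).
    destruct (first_reach v t1 t0 vs) as [t3 [Ht3 [Hv3 _]]]; try lra.
    { intros x Hx. apply v_continuity_pt. lra. }
    exists t3. split; [lra | exact Hv3]. }
  assert (Hu3 : uM <= u t3 <= 2) by (split; [apply Habove | apply Hle2]; lra).
  apply Rlt_not_le in Hlt. apply Hlt. apply (u_stays_ge_uM t3); try lra.
  unfold lyap. rewrite Hvt3. unfold lyap_v at 1. rewrite Rdiv_diag, ln_1 by lra.
  rewrite lyap_u_eq by lra.
  assert ((u t3 - s) ^ 2 / u t3 <= 4 / uM).
  { unfold Rdiv. apply Rmult_le_compat; [apply pow2_ge_0 | left; apply Rinv_0_lt_compat; lra | nra |].
    apply Rinv_le_contravar; lra. }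
  assert (0 <= (u t3 - s) ^ 2 / u t3) by (apply Rdiv_le_0_compat; [apply pow2_ge_0 | lra]).
  assert (eps * (1 - d) * ((u t3 - s) ^ 2 / u t3) <= eps * (4 / uM)).
  { apply Rmult_le_compat; try lra. apply Rmult_le_pos; lra. nra. }
  assert (eps * (4 / uM) < lyap_v vs (phi th et uM)).
  { apply Rmult_lt_reg_r with uM; [lra |].
    replace (eps * (4 / uM) * uM) with (eps * 4) by (field; lra). lra. }
  lra.
Qed.

(* While [v] stays [rho]-away from [vs] and [phi u] stays [rho/4]-close to it,
   [u' = u^2 (phi u - v)] keeps a sign and a size, so [u] must move. *)
Lemma u_drift t tau rho : 0 <= t -> 0 < tau -> 0 < rho ->
  (forall z, t <= z <= t + tau ->
     s / 2 <= u z /\ Rabs (phi th et (u z) - vs) < rho / 4 /\ Rabs (v z - v t) <= rho / 2) ->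
  rho <= Rabs (v t - vs) -> s ^ 2 * rho * tau / 16 <= Rabs (u (t + tau) - u t).
Proof.
  intros Ht Htau Hrho Hnear Hfar.
  assert (Hsq : forall z, t <= z <= t + tau -> s ^ 2 / 4 <= u z ^ 2) by
    (intros z Hz; destruct (Hnear z Hz) as [Hz1 _];
     replace (s ^ 2 / 4) with ((s / 2) ^ 2) by field; apply pow_incr; lra).
  destruct (Rle_lt_dec 0 (v t - vs)) as [Hup | Hdown].
  - rewrite Rabs_right in Hfar by lra.
    assert (Hdrop : u (t + tau) - u t <= - (s ^ 2 * rho / 16) * (t + tau - t)).
    { apply (mvt_upper u (fun z => F1 th et (u z) (v z))); [lra | intros z Hz; apply u_derive; lra |].
      intros z Hz. destruct (Hnear z Hz) as [Hz1 [Hphi Hv]]. pose proof (Hsq z Hz).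
      apply Rabs_def2 in Hphi. apply Rabs_le_between in Hv. rewrite F1_factor by lra.
      assert (phi th et (u z) - v z <= - (rho / 4)) by lra. nra. }
    rewrite Rabs_left1; [lra |]. assert (0 < s ^ 2 * rho * tau) by (repeat apply Rmult_lt_0_compat; nra). lra.
  - rewrite Rabs_left in Hfar by lra.
    assert (Hrise : s ^ 2 * rho / 16 * (t + tau - t) <= u (t + tau) - u t).
    { apply (mvt_lower u (fun z => F1 th et (u z) (v z))); [lra | intros z Hz; apply u_derive; lra |].
      intros z Hz. destruct (Hnear z Hz) as [Hz1 [Hphi Hv]]. pose proof (Hsq z Hz).
      apply Rabs_def2 in Hphi. apply Rabs_le_between in Hv. rewrite F1_factor by lra.
      assert (rho / 4 <= phi th et (u z) - v z) by lra. nra. }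
    rewrite Rabs_right; [lra |]. assert (0 < s ^ 2 * rho * tau) by (repeat apply Rmult_lt_0_compat; nra). lra.
Qed.

Section Bounded.

Variables T V : R.
Hypothesis HT : 0 <= T.
Hypothesis Hu2 : forall t, T <= t -> u t <= 2.
Hypothesis HvV : forall t, T <= t -> v t <= V.

Lemma V_pos : 0 < V.
Proof. pose proof (HvV T (Rle_refl T)). pose proof (Hpos T HT). lra. Qed.

Lemma u_window g : 0 < g -> exists tau, 0 < tau /\
  forall t z, T <= t <= z -> z <= t + tau -> Rabs (u z - u t) <= g.
Proof.
  pose proof V_pos. apply (window_of_lipschitz u T (2 * (2 + th) * (4 + et) + 4 * V)); [nra |].
  intros t z Htz. apply (lipschitz_of_derive u (fun x => F1 th et (u x) (v x))); [lra | |].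
  - intros x Hx. apply u_derive. lra.
  - intros x Hx. destruct (Hpos x ltac:(lra)). apply F1_abs_le; auto; split; auto.
    + apply Hu2. lra.
    + apply HvV. lra.
Qed.

Lemma v_window g : 0 < g -> exists tau, 0 < tau /\
  forall t z, T <= t <= z -> z <= t + tau -> Rabs (v z - v t) <= g.
Proof.
  pose proof V_pos. pose proof d_lt_1.
  apply (window_of_lipschitz v T (4 * eps * V)); [nra |].
  intros t z Htz. apply (lipschitz_of_derive v (fun x => F2 d et eps (u x) (v x))); [lra | |].
  - intros x Hx. apply v_derive. lra.
  - intros x Hx. destruct (Hpos x ltac:(lra)) as [Hux Hvx].
    pose proof (Hu2 x ltac:(lra)). pose proof (HvV x ltac:(lra)).
    rewrite F2_factor. apply Rabs_le.
    assert (-1 <= (1 - d) * (u x ^ 2 - s ^ 2) <= 4) by (split; nra).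
    replace (eps * (1 - d) * v x * (u x ^ 2 - s ^ 2)) with (eps * v x * ((1 - d) * (u x ^ 2 - s ^ 2))) by ring.
    assert (0 <= eps * v x <= eps * V) by (split; nra).
    split; nra.
Qed.

Lemma u_far_on_window g : 0 < g -> exists tau, 0 < tau /\
  forall t z, T <= t <= z -> z <= t + tau -> g <= Rabs (u t - s) -> g / 2 <= Rabs (u z - s).
Proof.
  intros Hg. destruct (u_window (g / 2) ltac:(lra)) as [tau [Htau Hwin]].
  exists tau. split; [exact Htau |]. intros t z Htz Hz Hfar.
  specialize (Hwin t z Htz Hz).
  pose proof (Rabs_triang (u t - u z) (u z - s)) as Htri.
  replace (u t - u z + (u z - s)) with (u t - s) in Htri by ring.
  rewrite (Rabs_minus_sym (u t) (u z)) in Htri. lra.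
Qed.

Lemma v_converges_of_u_converges : converges u s -> converges v vs.
Proof.
  intros Hcu. apply NNPP. intros Hn. destruct (not_converges v vs Hn) as [rho [Hrho Hfar]].
  pose proof vs_pos as Hvs. assert (Hs0 : 0 < s) by lra.
  destruct (v_window (rho / 2) ltac:(lra)) as [tau [Htau Hvnear]].
  destruct (continuity_pt_ball (phi th et) s (rho / 4)) as [k [Hk Hphi]]; [| lra |].
  { apply (is_derive_continuity_pt _ _ _ (phi_derive th et s Hs0)). }
  destruct (exists_pos_le_all [s / 2; k; s ^ 2 * rho * tau / 64]) as [kap [Hkap Hle]].
  { repeat constructor; try lra. apply Rdiv_lt_0_compat; [repeat apply Rmult_lt_0_compat; nra | lra]. }
  rewrite !Forall_cons_iff in Hle. destruct Hle as (Hkap1 & Hkap2 & Hkap3 & _).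
  destruct (Hcu kap ltac:(lra)) as [T' HT'].
  destruct (Hfar (Rmax T' T)) as [t [Ht Hvt]].
  pose proof (Rmax_l T' T). pose proof (Rmax_r T' T).
  assert (Hdrift := u_drift t tau rho ltac:(lra) Htau Hrho).
  assert (Hu_t := HT' t ltac:(lra)). assert (Hu_tau := HT' (t + tau) ltac:(lra)).
  apply Rabs_def2 in Hu_t. apply Rabs_def2 in Hu_tau.
  assert (Hclose : Rabs (u (t + tau) - u t) <= 2 * kap) by (apply Rabs_le; lra).
  enough (s ^ 2 * rho * tau / 16 <= Rabs (u (t + tau) - u t)).
  { assert (0 < s ^ 2 * rho * tau) by (repeat apply Rmult_lt_0_compat; nra). lra. }
  apply Hdrift; [| exact Hvt]. intros z Hz.
  pose proof (HT' z ltac:(lra)) as Huz. split; [apply Rabs_def2 in Huz; lra | split].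
  - apply Hphi. lra.
  - apply Hvnear; lra.
Qed.

End Bounded.

Lemma converges_right T : 0 <= T -> (forall t, T <= t -> uM <= u t <= 2) ->
  converges u s /\ converges v vs.
Proof.
  intros HT Hb. pose proof vs_pos as Hvs. pose proof d_lt_1.
  set (G t := lyap d eps s vs (u t) (v t)).
  assert (Gmono : forall x y, T <= x <= y -> G y <= G x).
  { intros x y Hxy. apply lyap_nonincr; [lra |]. intros z Hz. apply Hb. lra. }
  assert (Gnonneg : forall x, T <= x -> 0 <= G x).
  { intros x Hx. destruct (Hpos x ltac:(lra)) as [Hux Hvx].
    pose proof (lyap_v_le_lyap eps (u x) (v x) Heps Hux). pose proof (lyap_v_nonneg vs (v x) Hvs Hvx).
    unfold G. lra. }
  assert (HvV : forall t, T <= t -> v t <= 2 * (G T + vs)).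
  { intros t Ht. destruct (Hpos t ltac:(lra)) as [Hut Hvt]. apply lyap_v_bound; auto.
    pose proof (lyap_v_le_lyap eps (u t) (v t) Heps Hut). pose proof (Gmono T t ltac:(lra)).
    unfold G in *. lra. }
  assert (Hu2 : forall t, T <= t -> u t <= 2) by (intros t Ht; apply Hb, Ht).
  assert (Hcu : converges u s).
  { apply (converges_of_uniform_drops u G s T 0 Gmono Gnonneg). intros g Hg.
    destruct (dissipation_bound (g / 2) ltac:(lra)) as [c [Hc Hdiss]].
    destruct (u_far_on_window T _ HT Hu2 HvV g Hg) as [tau [Htau Hwin]].
    exists (eps * (1 - d) * c * tau). split; [repeat apply Rmult_lt_0_compat; lra |].
    intros t Ht Hfar. exists (t + tau). split; [lra |].
    enough (G (t + tau) - G t <= - (eps * (1 - d) * c) * (t + tau - t)) by lra.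
    apply (mvt_upper G (fun z => eps * (1 - d) * (u z ^ 2 - s ^ 2) * (phi th et (u z) - vs))); [lra | |].
    - intros z Hz. apply lyap_derive. lra.
    - intros z Hz. specialize (Hdiss (u z) (proj1 (Hb z ltac:(lra))) (Hwin t z ltac:(lra) ltac:(lra) Hfar)).
      rewrite Rmult_assoc. replace (- (eps * (1 - d) * c)) with (eps * (1 - d) * - c) by ring.
      apply Rmult_le_compat_l; [apply Rmult_le_pos |]; lra. }
  split; [exact Hcu |]. exact (v_converges_of_u_converges T _ HT Hu2 HvV Hcu).
Qed.

Section Left.

Variable T : R.
Hypothesis HT : 0 <= T.
Hypothesis Hlt : forall t, T <= t -> u t < s.

Lemma v_nonincr_left x y : T <= x <= y -> v y <= v x.
Proof.
  intros Hxy. pose proof d_lt_1.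
  enough (v y - v x <= 0 * (y - x)) by lra.
  apply (mvt_upper v (fun z => F2 d et eps (u z) (v z))); [lra | intros z Hz; apply v_derive; lra |].
  intros z Hz. rewrite F2_factor. destruct (Hpos z ltac:(lra)).
  specialize (Hlt z ltac:(lra)). assert (u z ^ 2 - s ^ 2 <= 0) by nra.
  assert (0 <= eps * (1 - d) * v z) by (repeat apply Rmult_le_pos; lra). nra.
Qed.

(* Below [phi]'s lower bound on [(0, s]], [u] would grow at a linear rate beyond [s]. *)
Lemma v_lower_bound_left t : T <= t -> (1 - s) * th * et / s <= v t.
Proof.
  intros Ht. set (m0 := (1 - s) * th * et / s). apply Rnot_lt_le. intros Hvt.
  destruct (Hpos t ltac:(lra)) as [Hut _].
  assert (Hgrowth : forall z, t <= z -> (u t) ^ 2 * (m0 - v t) <= F1 th et (u z) (v z) /\ u t <= u z).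
  { assert (Hgap : forall z, t <= z -> m0 - v t <= phi th et (u z) - v z).
    { intros z Hz. destruct (Hpos z ltac:(lra)).
      pose proof (phi_lower_bound th et s (u z) Hth Het ltac:(split; [lra | left; apply Hlt; lra]) Hs1).
      pose proof (v_nonincr_left t z ltac:(lra)). unfold m0. lra. }
    assert (Hincr : forall z, t <= z -> u t <= u z).
    { intros z Hz. enough (0 * (z - t) <= u z - u t) by lra.
      apply (mvt_lower u (fun y => F1 th et (u y) (v y))); [lra | intros y Hy; apply u_derive; lra |].
      intros y Hy. destruct (Hpos y ltac:(lra)). rewrite F1_factor by lra.
      pose proof (Hgap y ltac:(lra)). apply Rmult_le_pos; nra. }
    intros z Hz. split; [| exact (Hincr z Hz)].
    destruct (Hpos z ltac:(lra)). rewrite F1_factor by lra.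
    pose proof (Hgap z Hz). pose proof (Hincr z Hz).
    apply Rmult_le_compat; nra. }
  set (al := u t ^ 2 * (m0 - v t)).
  assert (Hal : 0 < al) by (unfold al; apply Rmult_lt_0_compat; nra).
  assert (0 < s / al) by (apply Rdiv_lt_0_compat; lra).
  assert (Hrise : al * (t + s / al - t) <= u (t + s / al) - u t).
  { apply (mvt_lower u (fun z => F1 th et (u z) (v z))); [lra | intros z Hz; apply u_derive; lra |].
    intros z Hz. apply Hgrowth. lra. }
  replace (al * (t + s / al - t)) with s in Hrise by (field; lra).
  specialize (Hlt (t + s / al) ltac:(lra)). lra.
Qed.

Lemma v_decay_rate_left g : 0 < g -> exists c, 0 < c /\
  forall z, T <= z -> g <= Rabs (u z - s) -> F2 d et eps (u z) (v z) <= - c.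
Proof.
  intros Hg. pose proof d_lt_1. pose proof v_lower_bound_left as Hlb.
  set (m0 := (1 - s) * th * et / s) in Hlb.
  assert (Hm0 : 0 < m0) by (unfold m0; apply Rdiv_lt_0_compat; [repeat apply Rmult_lt_0_compat |]; lra).
  clearbody m0.
  destruct (exists_pos_le_all [g; s]) as [g' [Hg' Hle]]; [repeat constructor; lra |].
  rewrite !Forall_cons_iff in Hle. destruct Hle as (Hgg' & Hsg' & _).
  assert (Hc1 : 0 < s ^ 2 - (s - g') ^ 2) by nra.
  exists (eps * (1 - d) * (m0 * (s ^ 2 - (s - g') ^ 2))).
  split; [repeat apply Rmult_lt_0_compat; lra |]. intros z Hz Hfar. rewrite F2_factor.
  pose proof (Hlt z Hz). rewrite Rabs_left in Hfar by lra. destruct (Hpos z ltac:(lra)).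
  pose proof (Hlb z Hz).
  assert (u z ^ 2 - s ^ 2 <= - (s ^ 2 - (s - g') ^ 2)) by nra.
  assert (v z * (u z ^ 2 - s ^ 2) <= - (m0 * (s ^ 2 - (s - g') ^ 2))) by nra.
  rewrite Rmult_assoc, Ropp_mult_distr_r. apply Rmult_le_compat_l; [apply Rmult_le_pos |]; lra.
Qed.

Lemma converges_left : converges u s /\ converges v vs.
Proof.
  assert (HvV : forall t, T <= t -> v t <= v T) by (intros t Ht; apply v_nonincr_left; lra).
  assert (Hu2 : forall t, T <= t -> u t <= 2) by (intros t Ht; specialize (Hlt t Ht); lra).
  assert (Hcu : converges u s).
  { apply (converges_of_uniform_drops u v s T _ v_nonincr_left v_lower_bound_left). intros g Hg.
    destruct (v_decay_rate_left (g / 2) ltac:(lra)) as [c [Hc Hdecay]].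
    destruct (u_far_on_window T (v T) HT Hu2 HvV g Hg) as [tau [Htau Hwin]].
    exists (c * tau). split; [apply Rmult_lt_0_compat; lra |].
    intros t Ht Hfar. exists (t + tau). split; [lra |].
    enough (v (t + tau) - v t <= - c * (t + tau - t)) by lra.
    apply (mvt_upper v (fun z => F2 d et eps (u z) (v z))); [lra | intros z Hz; apply v_derive; lra |].
    intros z Hz. apply Hdecay; [lra |]. apply (Hwin t z); lra. }
  split; [exact Hcu | exact (v_converges_of_u_converges T (v T) HT Hu2 HvV Hcu)].
Qed.

End Left.

(* If [u >= s] forever, then [v] increases, so [u' <= -s^2 (v T - vs) < 0] and [u] hits [0]. *)
Lemma u_eventually_lt_s T : 0 <= T -> (forall t, T <= t -> uM <= u t -> vs < v t) ->
  exists T1, T <= T1 /\ u T1 < s.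
Proof.
  intros HT Hv. apply NNPP. intros Hn.
  assert (Hge : forall t, T <= t -> s <= u t)
    by (intros t Ht; apply Rnot_lt_le; intros Hlt; apply Hn; now exists t).
  pose proof d_lt_1.
  assert (HvT : vs < v T) by (apply Hv; [lra | pose proof (Hge T (Rle_refl T)); lra]).
  assert (Hvincr : forall y, T <= y -> v T <= v y).
  { intros y Hy. enough (0 * (y - T) <= v y - v T) by lra.
    apply (mvt_lower v (fun z => F2 d et eps (u z) (v z))); [lra | intros z Hz; apply v_derive; lra |].
    intros z Hz. rewrite F2_factor. destruct (Hpos z ltac:(lra)).
    pose proof (Hge z ltac:(lra)). assert (0 <= u z ^ 2 - s ^ 2) by nra.
    assert (0 <= eps * (1 - d) * v z) by (repeat apply Rmult_le_pos; lra). nra. }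
  set (be := s ^ 2 * (v T - vs)). assert (Hbe : 0 < be) by (unfold be; apply Rmult_lt_0_compat; nra).
  destruct (Hpos T HT) as [HuT _].
  assert (Hstep : 0 < u T / be) by (apply Rdiv_lt_0_compat; lra).
  assert (Hdrop : u (T + u T / be) - u T <= - be * (T + u T / be - T)).
  { apply (mvt_upper u (fun z => F1 th et (u z) (v z))); [lra | intros z Hz; apply u_derive; lra |].
    intros z Hz. destruct (Hpos z ltac:(lra)). rewrite F1_factor by lra.
    pose proof (Hge z ltac:(lra)). pose proof (Hvincr z ltac:(lra)).
    pose proof (phi_decr_le s (u z) ltac:(lra)).
    assert (s ^ 2 <= u z ^ 2) by nra. unfold be. nra. }
  replace (- be * (T + u T / be - T)) with (- u T) in Hdrop by (field; lra).
  destruct (Hpos (T + u T / be) ltac:(lra)). lra.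
Qed.

Lemma u_stays_lt_s T1 : 0 <= T1 -> u T1 < s -> (forall t, T1 <= t -> uM <= u t -> vs < v t) ->
  forall t, T1 <= t -> u t < s.
Proof.
  intros HT1 HuT1 Hv t Ht. apply Rnot_le_lt. intros Hge.
  assert (T1 < t) by (destruct (Req_dec T1 t) as [<- |]; lra).
  destruct (first_reach u T1 t s) as [t0 [Ht0 [Hut0 Hbefore]]]; try lra.
  { intros x Hx. apply u_continuity_pt. lra. }
  assert (HF : 0 <= F1 th et (u t0) (v t0)).
  { apply (is_derive_ge_0_at_reach u t0 _ (t0 - T1)); [apply u_derive; lra | lra |].
    intros x Hx. rewrite Hut0. apply Hbefore. lra. }
  rewrite F1_factor, Hut0 in HF by lra.
  pose proof (Hv t0 ltac:(lra) ltac:(lra)).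
  assert (0 < s ^ 2) by (apply pow_lt; lra). nra.
Qed.

(* Either the orbit enters [u >= uM, v <= vs], where the Lyapunov function then decreases
   for ever, or it never does, and then [u] ends up below [s] for good. *)
Lemma converges_to_equilibrium : eps < lyap_v vs (phi th et uM) * uM / 4 ->
  converges u s /\ converges v vs.
Proof.
  intros Heps0. destruct u_eventually_le_2 as [T2 [HT2 Hle2]].
  destruct (classic (exists t1, T2 <= t1 /\ uM <= u t1 /\ v t1 <= vs)) as [[t1 [Ht1 [Hu1 Hv1]]] | Hn].
  - apply (converges_right t1); [lra |]. intros t Ht. split.
    + apply (u_stays_ge_uM_from_below_vs T2 t1); auto; lra.
    + apply Hle2. lra.
  - assert (Hv : forall t, T2 <= t -> uM <= u t -> vs < v t).
    { intros t Ht Hut. apply Rnot_le_lt. intros Hle. apply Hn. now exists t. }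
    destruct (u_eventually_lt_s T2 HT2 Hv) as [T1 [HT1 HuT1]].
    apply (converges_left T1); [lra |]. apply u_stays_lt_s; auto; [lra |].
    intros t Ht. apply Hv. lra.
Qed.

End Trajectory.

Section Stability.

Variable eps : R.
Hypothesis Heps : 0 < eps <= 1.

Lemma lyap_le_sq_dist x y : uM <= x -> vs / 2 <= y ->
  lyap d eps s vs x y <= ((x - s) ^ 2 + (y - vs) ^ 2) * (1 / uM + 2 / vs).
Proof.
  intros Hx Hy. pose proof vs_pos. pose proof d_lt_1. unfold lyap.
  rewrite lyap_u_eq by lra. pose proof (lyap_v_le vs y ltac:(lra) ltac:(lra)).
  assert ((x - s) ^ 2 / x <= (x - s) ^ 2 * (1 / uM)).
  { unfold Rdiv. rewrite Rmult_1_l. apply Rmult_le_compat_l; [apply pow2_ge_0 |].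
    apply Rinv_le_contravar; lra. }
  assert ((y - vs) ^ 2 / y <= (y - vs) ^ 2 * (2 / vs)).
  { unfold Rdiv. apply Rmult_le_compat_l; [apply pow2_ge_0 |].
    replace (2 * / vs) with (/ (vs / 2)) by (field; lra). apply Rinv_le_contravar; lra. }
  assert (0 <= (x - s) ^ 2 / x) by (apply Rdiv_le_0_compat; [apply pow2_ge_0 | lra]).
  assert (Hk : 0 <= eps * (1 - d) <= 1) by (split; [apply Rmult_le_pos | nra]; lra).
  assert (eps * (1 - d) * ((x - s) ^ 2 / x) <= (x - s) ^ 2 / x)
    by (rewrite <- (Rmult_1_l ((x - s) ^ 2 / x)) at 2; apply Rmult_le_compat_r; lra).
  assert (0 <= (x - s) ^ 2 * (2 / vs)) by (apply Rmult_le_pos; [apply pow2_ge_0 | apply Rdiv_le_0_compat; lra]).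
  assert (0 <= (y - vs) ^ 2 * (1 / uM)) by (apply Rmult_le_pos; [apply pow2_ge_0 | apply Rdiv_le_0_compat; lra]).
  nra.
Qed.

Lemma lyap_small_near_equilibrium h : 0 < h -> exists r, 0 < r /\
  forall x y, (x - s) ^ 2 + (y - vs) ^ 2 < r ^ 2 ->
    uM <= x < 1 /\ vs / 2 <= y /\ lyap d eps s vs x y < h.
Proof.
  intros Hh. pose proof vs_pos. set (C := 1 / uM + 2 / vs).
  assert (HC : 0 < C) by (unfold C; assert (0 < 1 / uM) by (apply Rdiv_lt_0_compat; lra);
    assert (0 < 2 / vs) by (apply Rdiv_lt_0_compat; lra); lra).
  destruct (exists_pos_le_all [s - uM; 1 - s; vs / 2; 1; h / C]) as [r [Hr Hle]].
  { repeat constructor; try lra. apply Rdiv_lt_0_compat; lra. }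
  rewrite !Forall_cons_iff in Hle. destruct Hle as (H1 & H2 & H3 & H4 & H5 & _).
  exists r. split; [exact Hr |]. intros x y Hxy.
  assert (Hx : Rabs (x - s) < r) by (apply sq_lt_abs; [lra | pose proof (pow2_ge_0 (y - vs)); lra]).
  assert (Hy : Rabs (y - vs) < r) by (apply sq_lt_abs; [lra | pose proof (pow2_ge_0 (x - s)); lra]).
  apply Rabs_def2 in Hx. apply Rabs_def2 in Hy.
  split; [lra | split; [lra |]].
  eapply Rle_lt_trans; [apply lyap_le_sq_dist; lra |]. fold C.
  apply Rlt_le_trans with (r ^ 2 * C); [apply Rmult_lt_compat_r; lra |].
  apply Rle_trans with (r * C); [apply Rmult_le_compat_r; nra |].
  apply Rmult_le_reg_r with (/ C); [apply Rinv_0_lt_compat; lra |].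
  replace (r * C * / C) with r by (field; lra). exact H5.
Qed.

Lemma near_equilibrium_of_lyap_small e : 0 < e -> exists h, 0 < h /\
  forall x y, 0 < x <= 1 -> 0 < y -> lyap d eps s vs x y < h -> (x - s) ^ 2 + (y - vs) ^ 2 < e ^ 2.
Proof.
  intros He. pose proof vs_pos. pose proof d_lt_1.
  assert (Hk : 0 < eps * (1 - d)) by (apply Rmult_lt_0_compat; lra).
  destruct (exists_pos_le_all [e / 2; vs / 2]) as [rho [Hrho Hle]]; [repeat constructor; lra |].
  rewrite !Forall_cons_iff in Hle. destruct Hle as (Hrho1 & Hrho2 & _).
  destruct (exists_pos_le_all [lyap_v vs (vs + rho); lyap_v vs (vs - rho); eps * (1 - d) * e ^ 2 / 4])
    as [h [Hh Hle]].
  { repeat constructor; try (apply lyap_v_pos; lra). apply Rdiv_lt_0_compat; [apply Rmult_lt_0_compat; [lra | apply pow_lt; lra] | lra]. }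
  rewrite !Forall_cons_iff in Hle. destruct Hle as (Hh1 & Hh2 & Hh3 & _).
  exists h. split; [exact Hh |]. intros x y Hx Hy Hlyap.
  pose proof (lyap_v_le_lyap eps x y (proj1 Heps) (proj1 Hx)) as Hv.
  pose proof (lyap_v_nonneg vs y ltac:(lra) Hy).
  assert (Hyclose : Rabs (y - vs) < rho).
  { apply Rabs_def1.
    - apply Rnot_le_lt. intros Hge. pose proof (lyap_v_incr vs (vs + rho) y ltac:(lra) ltac:(lra)). lra.
    - apply Rnot_le_lt. intros Hge. pose proof (lyap_v_decr vs y (vs - rho) ltac:(lra) ltac:(lra) ltac:(lra)). lra. }
  assert (Hu : eps * (1 - d) * ((x - s) ^ 2 / x) < eps * (1 - d) * (e ^ 2 / 4)).
  { unfold lyap in Hlyap. rewrite lyap_u_eq in Hlyap by lra. lra. }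
  apply Rmult_lt_reg_l in Hu; [| exact Hk].
  assert ((x - s) ^ 2 <= (x - s) ^ 2 / x).
  { unfold Rdiv. rewrite <- (Rmult_1_r ((x - s) ^ 2)) at 1. apply Rmult_le_compat_l; [apply pow2_ge_0 |].
    rewrite <- Rinv_1. apply Rinv_le_contravar; lra. }
  assert ((y - vs) ^ 2 < e ^ 2 / 4).
  { rewrite <- (pow2_abs (y - vs)). pose proof (Rabs_pos (y - vs)). nra. }
  nra.
Qed.

Lemma equilibrium_lyapunov_stable : lyapunov_stable d th et eps s vs.
Proof.
  intros e He. pose proof vs_pos. pose proof vs_lt_phi_uM.
  destruct (near_equilibrium_of_lyap_small e He) as [h [Hh Hnear]].
  pose proof (Rmin_l h (lyap_v vs (phi th et uM))). pose proof (Rmin_r h (lyap_v vs (phi th et uM))).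
  set (hM := Rmin h (lyap_v vs (phi th et uM))) in *.
  assert (HhM : 0 < hM) by (apply Rmin_pos; [exact Hh | apply lyap_v_pos; lra]).
  destruct (lyap_small_near_equilibrium hM HhM) as [r [Hr Hsmall]].
  exists r. split; [exact Hr |]. intros u v Hsol Hinit t Ht.
  destruct (Hsmall _ _ Hinit) as [Hu0 [Hv0 Hlyap0]].
  pose proof (solution_pos d th et eps u v Hsol ltac:(lra) ltac:(lra)) as Hpos.
  assert (Heps' : 0 < eps) by lra.
  assert (Hstay : forall z, 0 <= z -> uM <= u z).
  { apply (u_stays_ge_uM eps u v); auto; lra. }
  destruct (Hpos t Ht) as [Hut Hvt].
  apply Hnear; auto.
  - split; [exact Hut |]. pose proof (u_le_max_1 eps u v Hsol Hpos 0 t ltac:(lra)) as Hmax.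
    revert Hmax. apply Rmax_case; lra.
  - pose proof (lyap_nonincr eps u v Heps' Hsol Hpos 0 t ltac:(lra) ltac:(intros; apply Hstay; lra)). lra.
Qed.

End Stability.

Lemma equilibrium_attracts eps : 0 < eps -> eps < lyap_v vs (phi th et uM) * uM / 4 ->
  forall u v, is_solution d th et eps u v -> 0 < u 0 -> 0 < v 0 ->
    is_lim u p_infty s /\ is_lim v p_infty vs.
Proof.
  intros Heps Heps0 u v Hsol Hu0 Hv0.
  pose proof (solution_pos d th et eps u v Hsol Hu0 Hv0) as Hpos.
  destruct (converges_to_equilibrium eps u v) as [Hcu Hcv]; auto.
  split; now apply converges_is_lim.
Qed.

Lemma equilibrium_globally_stable eps : 0 < eps <= 1 -> eps < lyap_v vs (phi th et uM) * uM / 4 ->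
  globally_stable d th et eps s vs.
Proof.
  intros Heps Heps0. split; [now apply equilibrium_lyapunov_stable |].
  apply equilibrium_attracts; lra.
Qed.

End Model.

Theorem theorem6 (delta theta eta uM : R) :
  0 < delta -> 0 < theta -> 0 < eta ->
  in_region eta theta ->
  (* u_M : the larger fold point (largest critical point of phi in (0,1)) *)
  0 < uM < 1 ->
  is_derive (phi theta eta) uM 0 ->
  (forall u, 0 < u < 1 -> is_derive (phi theta eta) u 0 -> u <= uM) ->
  (* E_star lies in the open first quadrant *)
  delta < / (1 + eta) ->
  uM < ustar delta eta ->
  exists eps0, 0 < eps0 /\
    forall eps, 0 < eps < eps0 ->
      globally_stable delta theta eta eps (ustar delta eta) (vstar delta theta eta).
Proof.
  intros Hd Hth He _ HuM HduM Hcrit Hdel HuMs.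
  destruct (ustar_spec delta eta Hd He Hdel) as [Hs Hds].
  pose proof (phi_decr_right_of_uM theta eta uM Hth He HuM HduM Hcrit) as Hdecr.
  unfold vstar. set (s := ustar delta eta) in *.
  pose proof (vs_pos theta eta uM s Hth He ltac:(lra) HuMs ltac:(lra)).
  pose proof (vs_lt_phi_uM theta eta uM s HuMs Hdecr).
  assert (HvM : 0 < lyap_v (phi theta eta s) (phi theta eta uM)) by (apply lyap_v_pos; lra).
  set (eps1 := lyap_v (phi theta eta s) (phi theta eta uM) * uM / 4).
  exists (Rmin 1 eps1).
  split; [apply Rmin_pos; [lra | unfold eps1; apply Rdiv_lt_0_compat; [apply Rmult_lt_0_compat |]; lra] |].
  intros eps Heps. pose proof (Rmin_l 1 eps1). pose proof (Rmin_r 1 eps1).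
  unfold eps1 in *. apply (equilibrium_globally_stable delta theta eta uM s); auto; lra.
Qed.
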